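(* Let $R\subseteq\mathbb N$ be a congruence-periodic sparse predicate, $d\in\mathbb N^+$, $\tilde R\subseteq^dR$, $n\ge2$, $\mathbf A=(A_1,\dots,A_n)$ an $n$-tuple of operators all $\neq_R0$, and $\Delta\in d\mathbb N$ sufficiently large. Let $a\in\mathbb Z$ satisfy $a>\inf\mathbf A\cdot\tilde R^n_\Delta$ and $a\le\max\{\mathbf A\cdot z:z\in\tilde R^n_\Delta,\ z_1=P^1_\Delta(a;\mathbf A,\tilde R)\}$. Then $$P_\Delta\big(a-A_1P^1_\Delta(a;\mathbf A,\tilde R);\ \mathbf A_{>1},\tilde R\big)=P^{>1}_\Delta(a;\mathbf A,\tilde R),$$ where $\mathbf A_{>1}=(A_2,\dots,A_n)$, $A_1P^1_\Delta(\cdot)$ denotes the operator $A_1$ applied to the element $P^1_\Delta(\cdot)\in\tilde R$, and $P^{>1}_\Delta(a;\mathbf A,\tilde R)$ denotes the tuple of coordinates $2,\dots,n$ of $P_\Delta(a;\mathbf A,\tilde R)$.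
   Context: Let $R\subseteq\mathbb N$ be infinite, enumerated increasingly as $(r_n)$; $\sigma:R\to R$ is the successor map, $\sigma^k$ its iterate. An operator on $R$ is $z\mapsto\sum_{i=0}^ma_i\sigma^i(z)$, $a_i\in\mathbb Z$. $A=_R0$: $Az=0$ for all $z\in R$; $A>_R0$ (resp. $<_R0$): $Az>0$ (resp. $<0$) for cofinitely many $z$. $R$ sparse: every operator satisfies (S1) $A=_R0$ or $A>_R0$ or $A<_R0$; (S2) if $A>_R0$ there is $\Delta$ with $A(\sigma^\Delta z)>z$ for all $z$. Congruence-periodic: $(r_n\bmod m)$ eventually periodic for each $m\ge1$. $\tilde R\subseteq^dR$: $\tilde R=\{r_{N+dt}:t\in\mathbb N\}$ for some $N$. For an $m$-tuple of operators $\mathbf C$, $\mathbf C\cdot z=\sum C_iz_i$, $\mathbf C\cdot S=\{\mathbf C\cdot z:z\in S\}$. $\tilde R^m_\Delta=\{z\in\tilde R^m:z_i\ge\sigma^\Delta z_{i+1}\ (1\le i\le m)\}$, $z_{m+1}:=\min\tilde R$. For an $m$-tuple $\mathbf C$ with entries $\neq_R0$ and $\Delta$ large enough that $z\mapsto\mathbf C\cdot z$ is injective on $R^m_\Delta$, $P_\Delta(x;\mathbf C,\tilde R)$ is the $z\in\tilde R^m_\Delta$ with largest $\mathbf C\cdot z$ subject to $\mathbf C\cdot z<x$ if $x>\inf\mathbf C\cdot\tilde R^m_\Delta$, and otherwise the $z\in\tilde R^m_\Delta$ minimising $\mathbf C\cdot z$; $P^i_\Delta$ is its $i$-th coordinate.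 ''$\Delta$ sufficiently large'' means $\Delta\ge\Delta_0$ for some suitable $\Delta_0$. *)

From mathcomp Require Import all_boot all_order all_algebra.
Set Implicit Arguments. Unset Strict Implicit. Unset Printing Implicit Defensive.
Import Order.TTheory GRing.Theory Num.Theory.
Local Open Scope ring_scope.

(* The infinite set R ⊆ ℕ is given by its increasing enumeration r : nat -> nat
   (R = range r).  An element z ∈ R is handled through its index k (z = r k),
   so that σ^i (r k) = r (k + i). *)

Definition strictly_incr (r : nat -> nat) : Prop :=
  forall i j : nat, (i < j)%N -> (r i < r j)%N.

(* operator  z ↦ Σ_i a_i σ^i(z), with coefficients A = [:: a_0; ...; a_m],
   applied to the element z = r k of R *)
Definition opapp (r : nat -> nat) (A : seq int) (k : nat) : int :=
  \sum_(i < size A) A`_i * ((r (k + i)%N)%:Z).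

Definition zeroR (r : nat -> nat) (A : seq int) : Prop :=
  forall k, opapp r A k = 0.
Definition posR (r : nat -> nat) (A : seq int) : Prop :=
  exists K : nat, forall k, (K <= k)%N -> 0 < opapp r A k.
Definition negR (r : nat -> nat) (A : seq int) : Prop :=
  exists K : nat, forall k, (K <= k)%N -> opapp r A k < 0.

Definition sparse (r : nat -> nat) : Prop :=
  forall A : seq int,
    (zeroR r A \/ posR r A \/ negR r A) /\
    (posR r A -> exists D : nat, forall k, ((r k)%:Z < opapp r A (k + D)%N)).

Definition congr_periodic (r : nat -> nat) : Prop :=
  forall m : nat, (0 < m)%N ->
    exists p N0 : nat, (0 < p)%N /\
      forall j, (N0 <= j)%N -> (r (j + p) %% m = r j %% m)%N.

(* R~ = { r_(N + d t) : t ∈ ℕ } ; index k belongs to R~ *)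
Definition inTilde (N d k : nat) : Prop := exists t : nat, k = (N + d * t)%N.

(* z ∈ R~^m_Δ, z given by indices k 1, ..., k m (1-based), z_i = r (k i);
   z_(m+1) := min R~ = r N *)
Definition inRtDelta (r : nat -> nat) (N d Delta m : nat) (k : nat -> nat) : Prop :=
  forall i : nat, (1 <= i <= m)%N ->
    inTilde N d (k i) /\
    (r ((if i == m then N else k i.+1) + Delta)%N <= r (k i))%N.

Definition dotop (r : nat -> nat) (m : nat) (C : nat -> seq int) (k : nat -> nat) : int :=
  \sum_(1 <= i < m.+1) opapp r (C i) (k i).

(* IsP r N d Delta m x C k  :<->  (indices of) z = P_Delta(x; C, R~) *)
Definition IsP (r : nat -> nat) (N d Delta m : nat) (x : int) (C : nat -> seq int)
    (k : nat -> nat) : Prop :=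
  inRtDelta r N d Delta m k /\
  ((exists w, inRtDelta r N d Delta m w /\ dotop r m C w < x) ->
     dotop r m C k < x /\
     forall w, inRtDelta r N d Delta m w -> dotop r m C w < x ->
       dotop r m C w <= dotop r m C k) /\
  (~ (exists w, inRtDelta r N d Delta m w /\ dotop r m C w < x) ->
     forall w, inRtDelta r N d Delta m w -> dotop r m C k <= dotop r m C w).

From mathcomp Require Import all_boot all_order all_algebra zify.
Import Order.TTheory GRing.Theory Num.Theory.
Local Open Scope ring_scope.

(* Sparseness applied to sigma - id shows that r grows at least geometrically,
   and applied to the increment of an eventually positive operator that this
   increment outgrows r.  Hence, for Delta large, the value of
   (A_2, ..., A_n) on a Delta-spaced tuple is strictly monotone in the first
   coordinate: the jump of the eventually signed A_2 dominates all the other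
   terms.  Let k = P_Delta(a; A) and u a tail tuple with
   (A_2, ..., A_n) . u < a - A_1 k_1.  If u_1 <= k_1 - Delta then (k_1, u) is
   admissible and maximality of k bounds u.  Otherwise u_1 exceeds both k_2
   and w_2, where w_1 = k_1 and A . w >= a; monotonicity in the first
   coordinate then either contradicts the choice of u or bounds it by the
   tail of k. *)

Section Operators.
Variable r : nat -> nat.
Hypothesis hr : strictly_incr r.

Lemma leq_r i j : (r i <= r j)%N = (i <= j)%N.
Proof. exact: (leq_mono hr i j). Qed.

Lemma leq_r_self k : (k <= r k)%N.
Proof. by elim: k => // k ih; apply: leq_ltn_trans ih (hr _ _ (ltnSn k)). Qed.

Definition is_op (f : nat -> int) := exists L, forall k, f k = opapp r L k.

Definition eventually_pos (f : nat -> int) := exists K, forall k, (K <= k)%N -> 0 < f k.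

Lemma opapp_widen L M k : (size L <= M)%N ->
  opapp r L k = \sum_(i < M) L`_i * (r (k + i)%N)%:Z.
Proof.
move=> hM; rewrite /opapp (big_ord_widen M (fun i => L`_i * (r (k + i)%N)%:Z)) //.
rewrite big_mkcond; apply: eq_bigr => i _; case: ifP => // /negbT.
by rewrite -leqNgt => h; rewrite nth_default // mul0r.
Qed.

Lemma opappN L k : opapp r (map -%R L) k = - opapp r L k.
Proof.
rewrite /opapp size_map -sumrN; apply: eq_bigr => i _.
by rewrite (nth_map 0) ?ltn_ord // mulNr.
Qed.

Lemma is_opD f g : is_op f -> is_op g -> is_op (fun k => f k + g k).
Proof.
move=> [L1 h1] [L2 h2]; set M := maxn (size L1) (size L2).
exists (mkseq (fun i => L1`_i + L2`_i) M) => k.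
rewrite h1 h2 (opapp_widen L1 M) ?leq_maxl // (opapp_widen L2 M) ?leq_maxr //.
rewrite (opapp_widen _ M) ?size_mkseq // -big_split; apply: eq_bigr => i _.
by rewrite nth_mkseq ?ltn_ord // mulrDl.
Qed.

Lemma is_opN f : is_op f -> is_op (fun k => - f k).
Proof. by move=> [L h]; exists (map -%R L) => k; rewrite h opappN. Qed.

Lemma is_op_shift f : is_op f -> is_op (fun k => f k.+1).
Proof.
move=> [L h]; exists (0 :: L) => k.
rewrite h /opapp /= big_ord_recl /= mul0r add0r; apply: eq_bigr => i _.
by rewrite /bump /= add1n addnS addSn.
Qed.

Lemma is_op_increment f : is_op f -> is_op (fun k => f k.+1 - f k).
Proof. by move=> hf; apply: is_opD; [apply: is_op_shift | apply: is_opN]. Qed.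

Lemma is_op_r_increment : is_op (fun k => (r k.+1)%:Z - (r k)%:Z).
Proof.
exists [:: -1; 1] => k; rewrite /opapp /= !big_ord_recl big_ord0 /=.
rewrite /bump /= addn0 addn1; lia.
Qed.

Definition normL (L : seq int) : nat := (\sum_(i < size L) absz (nth 0%R L i))%N.

Lemma opapp_norm_bound L k :
  `|opapp r L k| <= (normL L * r (k + size L)%N)%N%:Z.
Proof.
rewrite /opapp /normL; apply: le_trans (ler_norm_sum _ _ _) _.
rewrite big_distrl /= -natz natr_sum; apply: ler_sum => i _.
rewrite normrM natrM natz abszE natz ler_wpM2l // ger0_norm // lez_nat leq_r leq_add2l.
exact: ltnW.
Qed.

Hypothesis hsp : sparse r.

Lemma is_op_trichotomy f : is_op f ->
  (forall k, f k = 0) \/ eventually_pos f \/ eventually_pos (fun k => - f k).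
Proof.
move=> [L h]; have [[z|[[K p]|[K q]]] _] := hsp L.
- by left=> k; rewrite h z.
- by right; left; exists K => k hk; rewrite h p.
- by right; right; exists K => k hk; rewrite h oppr_gt0 q.
Qed.

Lemma is_op_dominates f : is_op f -> eventually_pos f ->
  exists D, forall k, (r k)%:Z < f (k + D)%N.
Proof.
move=> [L h] [K p]; have [_ [|D hD]] := hsp L.
  by exists K => k hk; rewrite -h p.
by exists D => k; rewrite h.
Qed.

Lemma r_doubling : exists j, forall t z, (2 ^ t * r z <= r (z + t * j))%N.
Proof.
have [|D hD] := is_op_dominates _ is_op_r_increment.
  by exists 0%N => k _; have := hr _ _ (ltnSn k); lia.
have double z : (2 * r z <= r (z + D.+1))%N.
  by have := hD z; have := leq_r z (z + D); rewrite leq_addr addnS; lia.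
exists D.+1; elim=> [|t ih] z; first by rewrite mul1n mul0n addn0.
rewrite mulSnr addnA expnS -mulnA; apply: leq_trans (double _).
by rewrite leq_mul2l ih.
Qed.

(* A zero or eventually negative increment would bound [f] above, against (S2). *)
Lemma eventually_pos_increment f : is_op f -> eventually_pos f ->
  eventually_pos (fun k => f k.+1 - f k).
Proof.
move=> hf hpos; have [D hD] := is_op_dominates _ hf hpos.
case: (is_op_trichotomy _ (is_op_increment _ hf)) => [const|[//|[K decr]]].
- have fE k : f k = f 0%N by elim: k => // k ih; have := const k; rewrite -ih; lia.
  by have := hD `|f 0%N|%N; rewrite fE; have := leq_r_self `|f 0%N|%N; lia.
- have fK e : f (K + e)%N <= f K.
    elim: e => [|e ih]; first by rewrite addn0.
    by have := decr (K + e)%N (leq_addr _ _); rewrite addnS; lia.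
  have := hD (`|f K| + K)%N; rewrite (_ : _ + D = K + (D + `|f K|))%N; last by lia.
  by have := fK (D + `|f K|)%N; have := leq_r_self (`|f K| + K)%N; lia.
Qed.

Lemma eventually_pos_gap f : is_op f -> eventually_pos f ->
  exists D, forall y x, (D <= y)%N -> (y < x)%N -> (r (x.-1 - D))%:Z < f x - f y.
Proof.
move=> hf hpos; have [D hD] := is_op_dominates _ (is_op_increment _ hf)
  (eventually_pos_increment _ hf hpos).
exists D => y x hy hyx.
have step z : (D <= z)%N -> (r (z - D))%:Z < f z.+1 - f z.
  by move=> hz; have := hD (z - D)%N; rewrite subnK.
have incr e : f y <= f (y + e)%N.
  elim: e => [|e ih]; first by rewrite addn0.
  by have := step (y + e)%N (leq_trans hy (leq_addr _ _)); rewrite addnS; lia.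
have := step x.-1 ltac:(lia); rewrite prednK; last by lia.
have := incr (x.-1 - y)%N; rewrite subnKC; lia.
Qed.

Lemma bounded_upto (F : nat -> nat) m : exists B, forall i, (i <= m)%N -> (F i <= B)%N.
Proof.
exists (\max_(i < m.+1) F i) => i hi.
exact: (@leq_bigmax _ (fun k : 'I_m.+1 => F k) (Ordinal (hi : (i < m.+1)%N))).
Qed.

Section Tuples.
Context {N d Delta m : nat} {w : nat -> nat}.
Hypothesis hw : inRtDelta r N d Delta m w.

Lemma inRtDelta_step i : (1 <= i)%N -> (i < m)%N -> (w i.+1 + Delta <= w i)%N.
Proof.
move=> h1 h2; have [_] := hw i (introT andP (conj h1 (ltnW h2))).
by rewrite (ltn_eqF h2) leq_r.
Qed.

Lemma inRtDelta_last : (1 <= m)%N -> (N + Delta <= w m)%N.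
Proof.
by move=> h; have [_] := hw m (introT andP (conj h (leqnn m))); rewrite eqxx leq_r.
Qed.

Lemma inRtDelta_head_gap j : (2 <= j <= m)%N -> (w j + Delta <= w 1)%N.
Proof.
elim: j => // j ih /andP[hj hjm].
have := inRtDelta_step j ltac:(lia) hjm.
case: (ltnP 1 j) => [h1j | hj1]; first by have := ih ltac:(lia); lia.
by rewrite (_ : j = 1%N); lia.
Qed.

Lemma inRtDelta_head_ge : (1 <= m)%N -> (Delta <= w 1)%N.
Proof.
move=> hm; have := inRtDelta_last hm.
case: (ltnP 1 m) => [h1m | hm1]; last by rewrite (_ : m = 1%N); lia.
by have := inRtDelta_head_gap m ltac:(lia); lia.
Qed.

Lemma tail_bound (C : nat -> seq int) M L :
    (forall i, (2 <= i <= m)%N -> (normL (C i) <= M)%N /\ (size (C i) <= L)%N) ->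
  `|\sum_(2 <= i < m.+1) opapp r (C i) (w i)| <= (m * M * r (w 1 - Delta + L))%N%:Z.
Proof.
move=> hC; apply: le_trans (ler_norm_sum _ _ _) _.
apply: (@le_trans _ _ (\sum_(2 <= i < m.+1) (M * r (w 1 - Delta + L))%N%:Z)).
  rewrite big_nat_cond [X in _ <= X]big_nat_cond; apply: ler_sum => i /andP[hi _].
  have [hM hL] := hC i ltac:(lia); apply: le_trans (opapp_norm_bound _ _) _.
  rewrite lez_nat leq_mul // leq_r.
  by have := inRtDelta_head_gap i ltac:(lia); lia.
rewrite sumr_const_nat -mulr_natr; lia.
Qed.

End Tuples.

Lemma inRtDelta_behead {N d Delta m : nat} {w : nat -> nat} :
  inRtDelta r N d Delta m.+1 w -> inRtDelta r N d Delta m (fun i => w i.+1).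
Proof. by move=> hw i hi; have := hw i.+1 ltac:(lia); rewrite eqSS. Qed.

Definition tuple_cons (k : nat) (w : nat -> nat) : nat -> nat :=
  fun i => if (i <= 1)%N then k else w i.-1.

Lemma inRtDelta_cons {N d Delta m k : nat} {w : nat -> nat} : (1 <= m)%N ->
    inTilde N d k -> inRtDelta r N d Delta m w -> (w 1%N + Delta <= k)%N ->
  inRtDelta r N d Delta m.+1 (tuple_cons k w).
Proof.
move=> hm hk hw hwk i /andP[hi1 him]; rewrite /tuple_cons.
case: (ltnP 1 i) => [h1i | hi]; last first.
  rewrite (_ : i = 1%N) /=; last by lia.
  by rewrite eqSS eq_sym (gtn_eqF hm) leq_r.
case: i hi1 him h1i => [//|j] _ hjm hj /=.
by have := hw j ltac:(lia); rewrite eqSS.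
Qed.

Lemma dotop_recl m C w :
  dotop r m.+1 C w = opapp r (C 1%N) (w 1%N) + dotop r m (fun i => C i.+1) (fun i => w i.+1).
Proof. by rewrite /dotop big_nat_recl. Qed.

Lemma dotop_cons m C k w :
  dotop r m.+1 C (tuple_cons k w) = opapp r (C 1%N) k + dotop r m (fun i => C i.+1) w.
Proof.
rewrite dotop_recl /dotop; congr (_ + _); apply: eq_big_nat => i hi.
by rewrite /tuple_cons ltnNge (_ : (1 <= i)%N) //; case/andP: hi.
Qed.

Lemma dotopN m C w : dotop r m (fun i => map -%R (C i)) w = - dotop r m C w.
Proof. by rewrite /dotop -sumrN; apply: eq_bigr => i _; rewrite opappN. Qed.

Lemma IsP_of_max N d Delta m x C k :
    inRtDelta r N d Delta m k -> dotop r m C k < x ->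
    (forall u, inRtDelta r N d Delta m u -> dotop r m C u < x ->
       dotop r m C u <= dotop r m C k) ->
  IsP r N d Delta m x C k.
Proof. by move=> hk hkx hmax; split=> //; split=> [_ | []] //; exists k. Qed.

Definition incr_in_head (N d Delta m : nat) (C : nat -> seq int) :=
  forall u v, inRtDelta r N d Delta m u -> inRtDelta r N d Delta m v ->
    (v 1 < u 1)%N -> dotop r m C v < dotop r m C u.

(* The head term jumps by more than [r] at a fixed distance below [u 1], while
   the spacing bounds every other term by a constant times [r] at least [Delta]
   below [u 1]; by [r_doubling] a large [Delta] absorbs the constant. *)
Lemma eventually_incr_in_head (C : nat -> seq int) m : (1 <= m)%N ->
    eventually_pos (opapp r (C 1%N)) ->
  exists Delta0, forall Delta N d, (Delta0 <= Delta)%N -> incr_in_head N d Delta m C.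
Proof.
move=> hm hpos.
have [D hgap] := eventually_pos_gap _ (ex_intro _ (C 1%N) (fun _ => erefl)) hpos.
have [j hj] := r_doubling.
have [M hM] := bounded_upto (fun i => normL (C i)) m.
have [L hL] := bounded_upto (fun i => size (C i)) m.
set t := (2 * m * M)%N.
exists (D + t * j + L).+1 => Delta N d hDelta u v hu hv huv.
have hC i : (2 <= i <= m)%N -> (normL (C i) <= M)%N /\ (size (C i) <= L)%N.
  by move=> hi; split; [apply: hM | apply: hL]; lia.
have Tu := tail_bound hu _ _ _ hC; have Tv := tail_bound hv _ _ _ hC.
have hx := inRtDelta_head_ge hu hm; have hy := inRtDelta_head_ge hv hm.
set x := u 1%N in huv hx Tu *; set y := v 1%N in huv hy Tv *.
have gap := hgap y x ltac:(lia) huv.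
set R := r (x - Delta + L).
have hpow : (2 ^ t * R <= r (x.-1 - D))%N.
  by apply: leq_trans (hj t _) _; rewrite leq_r; lia.
have hbig : (2 * (m * M * R) <= 2 ^ t * R)%N.
  by rewrite !mulnA leq_mul //; apply: ltnW; apply: ltn_expl.
have hRy : (m * M * r (y - Delta + L) <= m * M * R)%N.
  by rewrite leq_mul2l leq_r; apply/orP; right; lia.
rewrite /dotop !(big_ltn (hm : (1 < m.+1)%N)) -/x -/y.
move: Tu Tv; rewrite -/R !ler_norml => /andP[Tu1 Tu2] /andP[Tv1 Tv2].
set Su : int := \sum_(2 <= i < m.+1) _ in Tu1 Tu2 *.
set Sv : int := \sum_(2 <= i < m.+1) _ in Tv1 Tv2 *.
lia.
Qed.

Lemma eventually_monotone_in_head (C : nat -> seq int) m : (1 <= m)%N ->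
    ~ zeroR r (C 1%N) ->
  exists Delta0, forall Delta N d, (Delta0 <= Delta)%N ->
    incr_in_head N d Delta m C \/ incr_in_head N d Delta m (fun i => map -%R (C i)).
Proof.
move=> hm hC.
case: (is_op_trichotomy _ (ex_intro _ (C 1%N) (fun _ => erefl))) => [z | [pos | [K neg]]].
- by case: hC.
- by have [D0 h] := eventually_incr_in_head _ _ hm pos; exists D0 => *; left; apply: h.
- have [|D0 h] := eventually_incr_in_head (fun i => map -%R (C i)) _ hm.
    by exists K => k hk; rewrite opappN; apply: neg.
  by exists D0 => *; right; apply: h.
Qed.

End Operators.

Theorem mainTheorem19 (r : nat -> nat) (hr : strictly_incr r)
  (hsp : sparse r) (hcp : congr_periodic r)
  (d : nat) (hd : (0 < d)%N) (N : nat)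
  (n : nat) (hn : (2 <= n)%N) (A : nat -> seq int)
  (hA : forall i, (1 <= i <= n)%N -> ~ zeroR r (A i)) :
  exists Delta0 : nat, forall Delta : nat, (Delta0 <= Delta)%N -> (d %| Delta)%N ->
  forall a : int,
    (exists w, inRtDelta r N d Delta n w /\ dotop r n A w < a) ->
    forall k : nat -> nat, IsP r N d Delta n a A k ->
    (exists w, inRtDelta r N d Delta n w /\ w 1%N = k 1%N /\ a <= dotop r n A w) ->
    IsP r N d Delta n.-1 (a - opapp r (A 1%N) (k 1%N))
        (fun i => A i.+1) (fun i => k i.+1).
Proof.
case: n hn hA => // n hn hA; have hn1 : (1 <= n)%N by lia.
have [D0 hmono] :=
  eventually_monotone_in_head r hr hsp (fun i => A i.+1) _ hn1 (hA 2%N ltac:(lia)).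
exists D0 => Delta hDelta _ a [w0 [hw0 hw0a]] k [hk [hbelow _]] [w [hw [hw1 hwa]]].
have [hka hmax] := hbelow (ex_intro _ w0 (conj hw0 hw0a)).
rewrite dotop_recl in hka; rewrite dotop_recl hw1 in hwa.
have hk' := inRtDelta_behead r hk; have hw' := inRtDelta_behead r hw.
have hk12 := inRtDelta_step r hr hk 1 (leqnn 1) hn.
have hw12 := inRtDelta_step r hr hw 1 (leqnn 1) hn.
rewrite [n.+1.-1]/=; apply: IsP_of_max => // [|u hu hua]; first by lia.
case: (leqP (u 1%N + Delta) (k 1%N)) => hgap.
  have hk1 : inTilde N d (k 1%N) by have [] := hk 1%N ltac:(lia).
  have := hmax _ (inRtDelta_cons r hr hn1 hk1 hu hgap).
  by rewrite dotop_cons dotop_recl; lia.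
case: (hmono Delta N d hDelta) => hincr.
  by have := hincr _ _ hu hw' ltac:(lia); rewrite -hw1 in hgap; lia.
by have := hincr _ _ hu hk' ltac:(lia); rewrite !dotopN; lia.
Qed.
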